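(* Let $A$ be a unital Banach algebra. The following are equivalent: (i) $A$ admits a character (a nonzero multiplicative linear functional $A\to\mathbb{C}$); (ii) there exists a nonzero Banach space that is a left function module over $A$; (iii) every (nonzero) Banach space $X$ admits a left $A$-module action making it a left function module over $A$. Moreover, for any character $\varphi$ of $A$ and any Banach space $X$, the action $a\cdot x=\varphi(a)x$ makes $X$ a left function module over $A$.
   Context: A left Banach $A$-module action satisfies $1\cdot x=x$ and $\|a\cdot x\|\le\|a\|\|x\|$; $X$ is a left function module over $A$ if there exist a compact Hausdorff space $K$, a linear isometry $i\colon X\to C(K)$ and a contractive unital homomorphism $\theta\colon A\to C(K)$ with $i(a\cdot x)=\theta(a)i(x)$ for all $a,x$. *)

From HB Require Import structures.
From mathcomp Require Import all_boot all_order all_algebra.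
From mathcomp Require Import all_classical all_reals all_analysis.
From mathcomp Require Import complex.
Import Order.TTheory GRing.Theory Num.Theory.
Import numFieldNormedType.Exports.

Set Implicit Arguments.
Unset Strict Implicit.
Unset Printing Implicit Defensive.

Local Open Scope ring_scope.
Local Open Scope classical_set_scope.

(* The complex numbers over a real field R, seen as a numClosedFieldType
   (so that it carries its canonical normed/topological structure). *)
Definition CC (R : realType) : numClosedFieldType := R[i].

Definition supnorm (R : realType) (K : Type) (f : K -> CC R) : CC R :=
  ((sup [set complex.Re `|f k| | k in [set: K]]) +i* 0)%C.

Definition unital_banach_algebra (R : realType)
    (A : completeNormedModType (CC R)) (mul : A -> A -> A) (one : A) : Prop :=
  [/\ (forall a b c, mul a (mul b c) = mul (mul a b) c),
      (forall a, mul one a = a) /\ (forall a, mul a one = a),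
      (forall a b c, mul (a + b) c = mul a c + mul b c) /\
      (forall a b c, mul a (b + c) = mul a b + mul a c),
      (forall (k : CC R) a b, mul (k *: a) b = k *: mul a b) /\
      (forall (k : CC R) a b, mul a (k *: b) = k *: mul a b) &
      (forall a b, `|mul a b| <= `|a| * `|b|) /\
      `|one| = 1].

Definition is_character (R : realType)
    (A : completeNormedModType (CC R)) (mul : A -> A -> A)
    (phi : A -> CC R) : Prop :=
  [/\ (forall a b, phi (a + b) = phi a + phi b),
      (forall (k : CC R) a, phi (k *: a) = k * phi a),
      (forall a b, phi (mul a b) = phi a * phi b) &
      exists a, phi a != 0].

Definition left_banach_action (R : realType)
    (A : completeNormedModType (CC R)) (mul : A -> A -> A) (one : A)
    (X : completeNormedModType (CC R)) (act : A -> X -> X) : Prop :=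
  [/\ (forall x, act one x = x),
      (forall a x, `|act a x| <= `|a| * `|x|),
      (forall a b x, act (mul a b) x = act a (act b x)),
      (forall a b x, act (a + b) x = act a x + act b x) /\
      (forall (k : CC R) a x, act (k *: a) x = k *: act a x) &
      (forall a x y, act a (x + y) = act a x + act a y) /\
      (forall (k : CC R) a x, act a (k *: x) = k *: act a x)].

Definition function_module (R : realType)
    (A : completeNormedModType (CC R)) (mul : A -> A -> A) (one : A)
    (X : completeNormedModType (CC R)) (act : A -> X -> X) : Prop :=
  left_banach_action mul one act /\
  exists (K : topologicalType) (i : X -> K -> CC R) (theta : A -> K -> CC R),
    [/\ compact [set: K] /\ hausdorff_space K,
        (forall x, continuous (i x)) /\
        (forall x y k, i (x + y) k = i x k + i y k) /\
        (forall (c : CC R) x k, i (c *: x) k = c * i x k) /\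
        (forall x, `|x| = supnorm (i x)),
        (forall a, continuous (theta a)) /\
        (forall a b k, theta (a + b) k = theta a k + theta b k) /\
        (forall (c : CC R) a k, theta (c *: a) k = c * theta a k) /\
        (forall a b k, theta (mul a b) k = theta a k * theta b k) /\
        (forall k, theta one k = 1) /\
        (forall a, supnorm (theta a) <= `|a|) &
        (forall a x k, i (act a x) k = theta a k * i x k)].

(* Take for K the set of real-linear functionals f on X with
   f <= |.|, in the topology of pointwise convergence: it is compact by
   Tychonoff, and by the Hahn-Banach theorem the map sending x to
   (f |-> f x - i f (i x)) embeds X isometrically into C(K).  Then A acts
   through the constants phi(a), which are contractive: if |phi a| > |a|,
   then 1 - a / phi(a) is right invertible by a Neumann series, yet phi
   kills it.  Conversely, if X <> 0 is a function module, K is nonempty and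
   a |-> theta(a)(k) is a character for any point k of K. *)

From HB Require Import structures.
From mathcomp Require Import all_boot all_order all_algebra.
From mathcomp Require Import all_classical all_reals all_analysis.
From mathcomp Require Import complex.
From mathcomp Require Import ring lra.
Import Order.TTheory GRing.Theory Num.Theory.
Import numFieldNormedType.Exports.

Set Implicit Arguments.
Unset Strict Implicit.
Unset Printing Implicit Defensive.

Local Open Scope ring_scope.
Local Open Scope classical_set_scope.

Section real_embedding.
Variable R : realType.
Implicit Types t s : R.

(* t%:C itself lives in R[i], whose ring structure does not syntactically match
   that of CC R, so lemmas about CC R would not rewrite it. *)
Definition realC t : CC R := (t%:C)%C.

Lemma realC0 : realC 0 = 0.
Proof. by []. Qed.

Lemma realC1 : realC 1 = 1.
Proof. by []. Qed.

Lemma realCD t s : realC (t + s) = realC t + realC s.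
Proof. by rewrite /realC; simpc. Qed.

Lemma realCN t : realC (- t) = - realC t.
Proof. by rewrite /realC; simpc. Qed.

Lemma realCM t s : realC (t * s) = realC t * realC s.
Proof. by rewrite /realC; simpc. Qed.

Lemma realCV t : realC t^-1 = (realC t)^-1.
Proof. exact: (fmorphV (real_complex R)). Qed.

Lemma realC_inj : injective realC.
Proof. exact: complexI. Qed.

Lemma realC_le t s : (realC t <= realC s) = (t <= s).
Proof. exact: lecR. Qed.

Lemma realC_lt t s : (realC t < realC s) = (t < s).
Proof. exact: ltcR. Qed.

Lemma normC_realC t : `|realC t| = realC `|t|.
Proof. by rewrite normc_def /= expr0n /= addr0 sqrtr_sqr. Qed.

Lemma realC_Re (z : CC R) : z \is Num.real -> z = realC (complex.Re z).
Proof. by move=> zr; rewrite /realC RRe_real. Qed.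

Lemma realC_continuous : continuous realC.
Proof.
move=> t; apply/cvgrPdist_lt => e e_gt0.
have e_eq : e = realC (complex.Re e) := realC_Re (gtr0_real e_gt0).
have e'_gt0 : 0 < complex.Re e by rewrite -(realC_lt 0) -e_eq.
near=> s; rewrite -realCN -realCD normC_realC e_eq realC_lt.
by near: s; exact: cvgr_dist_lt.
Unshelve. all: by end_near.
Qed.

End real_embedding.

Section real_norm.
Variables (R : realType) (X : normedModType (CC R)).
Implicit Types (x y : X) (t : R).

Definition rnorm x : R := complex.Re `|x|.

Lemma rnormE x : `|x| = realC (rnorm x).
Proof. exact/realC_Re/normr_real. Qed.

Lemma rnorm_ge0 x : 0 <= rnorm x.
Proof. by rewrite -(realC_le 0) -rnormE; apply: normr_ge0. Qed.

Lemma rnormD x y : rnorm (x + y) <= rnorm x + rnorm y.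
Proof. by rewrite -realC_le realCD -!rnormE ler_normD. Qed.

Lemma rnormN x : rnorm (- x) = rnorm x.
Proof. by rewrite /rnorm normrN. Qed.

Lemma rnormZ t x : rnorm (realC t *: x) = `|t| * rnorm x.
Proof. by apply: realC_inj; rewrite realCM -!rnormE normrZ normC_realC. Qed.

End real_norm.

Section hahn_banach.
Variables (R : realType) (X : normedModType (CC R)).
Implicit Types (x y z : X) (t s : R) (G H : set (X * R)).

Definition real_dual_ball : set (X -> R) :=
  [set f | [/\ forall x y, f (x + y) = f x + f y,
               forall t x, f (realC t *: x) = t * f x &
               forall x, f x <= rnorm x]].

Definition dominated_graph G :=
  [/\ forall x a b, G (x, a) -> G (x, b) -> a = b,
      forall x y a b, G (x, a) -> G (y, b) -> G (x + y, a + b),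
      forall t x a, G (x, a) -> G (realC t *: x, t * a) &
      forall x a, G (x, a) -> a <= rnorm x].

Definition line_graph x0 := range (fun t => (realC t *: x0, t * rnorm x0)).

Lemma realC_scaler_eq0 t x : (realC t *: x == 0) = (t == 0) || (x == 0).
Proof. by rewrite scaler_eq0 -(inj_eq (@realC_inj R)) /realC rmorph0. Qed.

Lemma line_graph_dominated x0 : dominated_graph (line_graph x0).
Proof.
split.
- move=> x a b [t _ [<- <-]] [s _ [e <-]].
  have /eqP : realC (t - s) *: x0 = 0 by rewrite realCD realCN scalerBl e subrr.
  rewrite realC_scaler_eq0 subr_eq0 => /orP[/eqP -> // | /eqP x00].
  by rewrite /rnorm x00 normr0 /= !mulr0.
- move=> x y a b [t _ [<- <-]] [s _ [<- <-]].
  by exists (t + s) => //; rewrite realCD scalerDl mulrDl.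
- move=> t x a [s _ [<- <-]].
  by exists (t * s) => //; rewrite realCM scalerA mulrA.
- move=> x a [t _ [<- <-]].
  by rewrite rnormZ ler_wpM2r ?rnorm_ge0 ?ler_norm.
Qed.

Lemma dominated_graph_pairwise G :
  (forall p q, G p -> G q -> exists H, [/\ dominated_graph H, H `<=` G, H p & H q]) ->
  dominated_graph G.
Proof.
move=> hG; split.
- move=> x a b Gxa Gxb; have [H [[Hfun _ _ _] _ Hxa Hxb]] := hG _ _ Gxa Gxb.
  exact: Hfun Hxa Hxb.
- move=> x y a b Gxa Gyb; have [H [[_ Hadd _ _] HG Hxa Hyb]] := hG _ _ Gxa Gyb.
  exact/HG/Hadd.
- move=> t x a Gxa; have [H [[_ _ Hscale _] HG Hxa _]] := hG _ _ Gxa Gxa.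
  exact/HG/Hscale.
- move=> x a Gxa; have [H [[_ _ _ Hdom] _ Hxa _]] := hG _ _ Gxa Gxa.
  exact: Hdom.
Qed.

Section one_dimensional_extension.
Variables (A : set (X * R)) (x1 : X).
Hypotheses (A_dominated : dominated_graph A) (A00 : A (0, 0)).
Hypothesis x1_notin : forall a, ~ A (x1, a).

Lemma extension_gap y g z h :
  A (y, g) -> A (z, h) -> g - rnorm (y - x1) <= rnorm (z + x1) - h.
Proof.
case: A_dominated => _ Aadd _ Adom Ayg Azh.
have := Adom _ _ (Aadd _ _ _ _ Ayg Azh).
have : rnorm (y + z) <= rnorm (y - x1) + rnorm (z + x1).
  by rewrite -[y + z]addr0 -(addNr x1) addrACA rnormD.
lra.
Qed.

(* Any value in the gap of extension_gap extends the functional to x1; we take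
   the supremum of the lower bounds. *)
Let c := sup [set p.2 - rnorm (p.1 - x1) | p in A].

Lemma extension_value_ge y g : A (y, g) -> g - rnorm (y - x1) <= c.
Proof.
move=> Ayg; apply: ub_le_sup; last by exists (y, g).
by exists (rnorm (0 + x1) - 0) => _ [[z h] Azh <-]; exact: extension_gap Azh A00.
Qed.

Lemma extension_value_le z h : A (z, h) -> c <= rnorm (z + x1) - h.
Proof.
move=> Azh; apply: ge_sup; first by exists (0 - rnorm (0 - x1)), (0, 0).
by move=> _ [[y g] Ayg <-]; exact: extension_gap Ayg Azh.
Qed.

Definition extension_graph :=
  [set p | exists y g t, A (y, g) /\ p = (y + realC t *: x1, g + t * c)].

Lemma graph_sub y g y' g' : A (y, g) -> A (y', g') -> A (y - y', g - g').
Proof.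
case: A_dominated => _ Aadd Ascale _ Ayg Ay'g'.
apply: Aadd Ayg _; have := Ascale (-1) _ _ Ay'g'.
by rewrite realCN realC1 scaleN1r mulN1r.
Qed.

Lemma extension_graph_functional x a b :
  extension_graph (x, a) -> extension_graph (x, b) -> a = b.
Proof.
case: A_dominated => Afun _ Ascale _.
move=> [y [g [t [Ayg [-> ->]]]]] [y' [g' [t' [Ay'g' [e ->]]]]].
have dt : realC (t - t') *: x1 = y' - y.
  rewrite realCD realCN scalerBl.
  by apply: (addrI y); rewrite addrA e addrK addrC subrK.
have [tt' | t_neq] := eqVneq t t'; last first.
  exfalso; apply: (@x1_notin ((t - t')^-1 * (g' - g))).
  have -> : x1 = realC (t - t')^-1 *: (y' - y).
    by rewrite -dt scalerA -realCM mulVf ?subr_eq0 // realC1 scale1r.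
  exact/Ascale/graph_sub.
move: e; rewrite -tt' => /addIr yy'.
by rewrite (Afun _ _ _ Ayg (_ : A (y, g'))) // yy'.
Qed.

Lemma extension_graph_dominated x a : extension_graph (x, a) -> a <= rnorm x.
Proof.
case: A_dominated => _ _ Ascale Adom.
move=> [y [g [t [Ayg [-> ->]]]]].
have rescale s w : 0 < s ->
    s * rnorm (realC s^-1 *: y + w) = rnorm (y + realC s *: w).
  move=> s0; rewrite -[s in s * _]gtr0_norm // -rnormZ scalerDr scalerA.
  by rewrite -realCM mulfV ?gt_eqF // realC1 scale1r.
have [t_lt0 | t_gt0 | ->] := ltgtP t 0; last first.
- by rewrite realC0 scale0r addr0 mul0r addr0; exact: Adom.
- have := extension_value_le (Ascale t^-1 _ _ Ayg).
  move/(ler_wpM2l (ltW t_gt0)); rewrite mulrBr rescale // mulrA mulfV ?gt_eqF //.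
  lra.
- have s_gt0 : 0 < - t by rewrite oppr_gt0.
  have := extension_value_ge (Ascale (- t)^-1 _ _ Ayg).
  move/(ler_wpM2l (ltW s_gt0)); rewrite mulrBr rescale // mulrA mulfV ?gt_eqF //.
  rewrite scalerN -scaleNr -realCN opprK.
  lra.
Qed.

Lemma extension_graph_dominated_graph : dominated_graph extension_graph.
Proof.
case: A_dominated => _ Aadd Ascale _; split.
- exact: extension_graph_functional.
- move=> _ _ _ _ [y [g [t [Ayg [-> ->]]]]] [z [h [s [Azh [-> ->]]]]].
  exists (y + z), (g + h), (t + s); split; first exact: Aadd.
  by rewrite realCD scalerDl mulrDl; congr pair; rewrite addrACA.
- move=> r _ _ [y [g [t [Ayg [-> ->]]]]].
  exists (realC r *: y), (r * g), (r * t); split; first exact: Ascale.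
  by rewrite scalerDr scalerA -realCM mulrDr mulrA.
- exact: extension_graph_dominated.
Qed.

Lemma extension_graph_proper : A `<` extension_graph.
Proof.
split=> [[y g] Ayg | A_ext].
  by exists y, g, 0; rewrite realC0 scale0r addr0 mul0r addr0.
apply: (@x1_notin c); apply: A_ext.
by exists 0, 0, 1; rewrite realC1 scale1r add0r mul1r add0r.
Qed.

End one_dimensional_extension.

Lemma real_norming_functional x0 : exists2 f, real_dual_ball f & f x0 = rnorm x0.
Proof.
(* Zorn is applied to graphs whose union with the line through x0 is dominated,
   so that the empty chain has an upper bound. *)
pose L := line_graph x0.
pose P := [set G | dominated_graph (G `|` L)].
have [A [PA Amax]] : exists A, P A /\ forall B, A `<` B -> ~ P B.
  apply: Zorn_bigcup => F FP Ftot; apply: dominated_graph_pairwise.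
  have member p : (\bigcup_(G in F) G `|` L) p ->
      exists2 H, H = set0 \/ F H & (H `|` L) p.
    by case=> [[H FH Hp]|Lp]; [exists H; [right|left] | exists set0; [left|right]].
  move=> p q /member[H1 H1F H1p] /member[H2 H2F H2q].
  have [H [HF H1H H2H]] : exists H, [/\ H = set0 \/ F H, H1 `<=` H & H2 `<=` H].
    case: H1F => [-> | F1]; first by exists H2; split.
    case: H2F => [-> | F2]; first by exists H1; split => //; right.
    by case: (Ftot _ _ F1 F2) => [H12|H21]; [exists H2 | exists H1]; split => //; right.
  exists (H `|` L); split.
  - by case: HF => [->|/FP //]; rewrite set0U; exact: line_graph_dominated.
  - move=> z [Hz|Lz]; last by right.
    by case: HF Hz => [->//|FH Hz]; left; exists H.
  - by case: H1p => [/H1H|]; [left|right].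
  - by case: H2q => [/H2H|]; [left|right].
have LA : L `<=` A.
  apply: contrapT => LA; apply: (Amax (A `|` L)); last by rewrite /P /= -setUA setUid.
  split=> [z Az|ALA]; first by left.
  by apply: LA => z Lz; apply: ALA; right.
have A_dominated : dominated_graph A by move: PA; rewrite /P /= (setUidPl _ _).2.
have A00 : A (0, 0) by apply: LA; exists 0; rewrite // realC0 scale0r mul0r.
have A_total x : exists a, A (x, a).
  apply: contrapT => x_notin.
  have x_notin' a : ~ A (x, a) by move=> Axa; apply: x_notin; exists a.
  have A_ext := extension_graph_proper A00 x_notin'.
  apply: (Amax _ A_ext); rewrite /P /= (setUidPl _ _).2.
    exact: extension_graph_dominated_graph.
  exact: subset_trans LA A_ext.1.
pose f x := projT1 (cid (A_total x)).
have Af x : A (x, f x) := projT2 (cid (A_total x)).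
case: A_dominated => Afun Aadd Ascale Adom.
exists f; first split.
- by move=> x y; apply: Afun (Af _) _; apply: Aadd.
- by move=> t x; apply: Afun (Af _) _; apply: Ascale.
- by move=> x; apply: Adom.
apply: Afun (Af _) _; apply: LA.
by exists 1; rewrite // realC1 scale1r mul1r.
Qed.

End hahn_banach.

Section complexification.
Variables (R : realType) (X : normedModType (CC R)).
Local Notation i := ('i%C : CC R).

Lemma mulii : i * i = -1.
Proof. by rewrite -expr2 sqr_i. Qed.

Lemma complex_realC (k : CC R) : k = realC (complex.Re k) + i * realC (complex.Im k).
Proof. exact: complexE. Qed.

Definition complexify (f : X -> R) (x : X) : CC R :=
  realC (f x) - i * realC (f (i *: x)).

Variable f : X -> R.
Hypothesis f_ball : real_dual_ball f.

Lemma complexifyD x y : complexify f (x + y) = complexify f x + complexify f y.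
Proof. by case: f_ball => fD _ _; rewrite /complexify scalerDr !fD !realCD; ring. Qed.

Lemma complexifyZ (k : CC R) x : complexify f (k *: x) = k * complexify f x.
Proof.
case: f_ball => fD fZ _.
have fN y : f (- y) = - f y by rewrite -scaleN1r -realC1 -realCN fZ mulN1r.
have f_cscale a b y : f ((realC a + i * realC b) *: y) = a * f y + b * f (i *: y).
  by rewrite scalerDl [i * _]mulrC -scalerA fD !fZ.
have iZ : i *: (k *: x) = k *: (i *: x) by rewrite !scalerA mulrC.
rewrite /complexify iZ (complex_realC k) !f_cscale scalerA mulii scaleN1r fN.
rewrite !realCD !realCM !realCN.
(* The two sides differ by a multiple of 1 + i * i = 0. *)
have E (l r d : CC R) : l - r = d * (1 + i * i) -> l = r.
  by move=> e; apply/eqP; rewrite -subr_eq0 e mulii subrr mulr0.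
by apply: (E _ _ (realC (complex.Im k) * realC (f (i *: x)))); ring.
Qed.

Lemma Re_complexify x : complex.Re (complexify f x) = f x.
Proof. by rewrite /complexify /realC; simpc. Qed.

Lemma norm_complexify_le x : `|complexify f x| <= `|x|.
Proof.
case: f_ball => _ _ fle.
have [-> | nz] := eqVneq (complexify f x) 0; first by rewrite normr0.
(* The unimodular u rotates complexify f x onto the positive real axis, where
   complexify f (u *: x) = f (u *: x) <= |u *: x| = |x|. *)
pose u := (complexify f x)^*%C / `|complexify f x|.
have u_rot : u * complexify f x = `|complexify f x|.
  rewrite /u mulrAC -[X in X / _]mulrC -sqr_normc expr2 -mulrA mulfV ?mulr1 //.
  by rewrite normr_eq0.
have u_norm : `|u| = 1.
  by rewrite /u normrM normfV normcJ normr_id mulfV // normr_eq0.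
rewrite (realC_Re (normr_real (complexify f x))) -u_rot -complexifyZ Re_complexify.
apply: le_trans (_ : realC (rnorm (u *: x)) <= _); first by rewrite realC_le fle.
by rewrite -rnormE normrZ u_norm mul1r.
Qed.

Lemma complexify_ge x : f x <= complex.Re `|complexify f x|.
Proof.
rewrite -{1}(Re_complexify x) -realC_le.
rewrite -[X in _ <= X](realC_Re (normr_real (complexify f x))).
by apply: le_trans (normc_ge_Re _); rewrite realC_le ler_norm.
Qed.

End complexification.

Section banach_algebra.
Variables (R : realType) (A : completeNormedModType (CC R)).
Variables (mul : A -> A -> A) (one : A).
Hypothesis hA : unital_banach_algebra mul one.
Implicit Types a b c : A.

Lemma amulrDl a b c : mul (a + b) c = mul a c + mul b c.
Proof. by case: hA => _ _ [+ _] _ _; apply. Qed.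

Lemma amulrDr a b c : mul a (b + c) = mul a b + mul a c.
Proof. by case: hA => _ _ [_ +] _ _; apply. Qed.

Lemma amulNr a b : mul (- a) b = - mul a b.
Proof. by case: hA => _ _ _ [hl _] _; rewrite -scaleN1r hl scaleN1r. Qed.

Lemma amulrN a b : mul a (- b) = - mul a b.
Proof. by case: hA => _ _ _ [_ hr] _; rewrite -scaleN1r hr scaleN1r. Qed.

Lemma amul1r a : mul one a = a.
Proof. by case: hA => _ [+ _] _ _ _; apply. Qed.

Lemma amulr0 a : mul a 0 = 0.
Proof. by rewrite -[X in mul _ X](subrr 0) amulrDr amulrN subrr. Qed.

Lemma rnorm_amul a b : rnorm (mul a b) <= rnorm a * rnorm b.
Proof. by case: hA => _ _ _ _ [h _]; rewrite -realC_le realCM -!rnormE. Qed.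

Lemma rnorm_one : rnorm one = 1.
Proof. by case: hA => _ _ _ _ [_ h]; rewrite /rnorm h. Qed.

Section neumann_series.
Variable b : A.
Hypothesis b_lt1 : rnorm b < 1.
Let r := rnorm b.

Definition apow n := iter n (mul b) one.
Definition neumann n := \sum_(k < n) apow k.

Lemma rnorm_apow n : rnorm (apow n) <= r ^+ n.
Proof.
elim: n => [|n IH]; first by rewrite rnorm_one expr0.
rewrite exprS; apply: le_trans (rnorm_amul _ _) _.
by rewrite ler_wpM2l ?rnorm_ge0.
Qed.

Lemma amul_neumann n : mul (one - b) (neumann n) = one - apow n.
Proof.
elim: n => [|n IH]; first by rewrite /neumann big_ord0 amulr0 subrr.
rewrite /neumann big_ord_recr /= amulrDr IH amulrDl amul1r amulNr.
by rewrite addrA subrK.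
Qed.

Lemma neumann_sub m n : (m <= n)%N -> neumann n - neumann m = \sum_(m <= k < n) apow k.
Proof.
move=> mn; rewrite /neumann -!(big_mkord xpredT) (big_cat_nat (leq0n m) mn) /=.
by rewrite addrAC subrr add0r.
Qed.

Lemma rnorm_neumann_tail m n :
  (m <= n)%N -> rnorm (\sum_(m <= k < n) apow k) * (1 - r) <= r ^+ m.
Proof.
move=> mn; have r_ge0 : 0 <= r := rnorm_ge0 b.
have tri : rnorm (\sum_(m <= k < n) apow k) <= \sum_(m <= k < n) r ^+ k.
  elim/big_ind2 : _ => [|x y u v xu yv|k _]; last exact: rnorm_apow.
  - by rewrite /rnorm normr0.
  - by apply: le_trans (rnormD _ _) _; exact: lerD.
have geom : (\sum_(m <= k < n) r ^+ k) * (1 - r) = r ^+ m - r ^+ n.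
  rewrite mulr_suml (eq_bigr (fun k => - (r ^+ k.+1 - r ^+ k))) => [|k _].
    by rewrite sumrN (telescope_sumr (fun k => r ^+ k) mn) opprB.
  by rewrite exprS; ring.
have := exprn_ge0 n r_ge0.
have : 0 <= 1 - r by rewrite subr_ge0 ltW.
nra.
Qed.

Lemma expr_lt_near e : 0 < e -> \forall n \near \oo, r ^+ n < e.
Proof.
move=> e_gt0; have r_lt1 : `|r| < 1 by rewrite ger0_norm ?rnorm_ge0.
apply: filterS (cvgr_dist_lt _ _ (cvg_expr r_lt1) _ e_gt0) => n.
by rewrite sub0r normrN ger0_norm ?exprn_ge0 ?rnorm_ge0.
Qed.

Lemma neumann_cvg : cvg (neumann @ \oo).
Proof.
apply/cauchy_cvgP/cauchyP => e e_gt0.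
have e_eq : e = realC (complex.Re e) := realC_Re (gtr0_real e_gt0).
have e'_gt0 : 0 < complex.Re e by rewrite -(realC_lt 0) -e_eq.
have r_lt1 : 0 < 1 - r by rewrite subr_gt0.
have [N _ rN] := expr_lt_near (mulr_gt0 e'_gt0 r_lt1).
exists (neumann N), N => // n /= Nn.
rewrite -ball_normE /= -opprB normrN neumann_sub //.
rewrite rnormE e_eq realC_lt -(ltr_pM2r r_lt1).
exact: le_lt_trans (rnorm_neumann_tail Nn) (rN _ (leqnn N)).
Qed.

Lemma one_sub_rinvertible : exists c, mul (one - b) c = one.
Proof.
have Sc := neumann_cvg; set c := lim _ in Sc.
exists c; apply/eqP; rewrite -subr_eq0 -normr_eq0 rnormE.
suff -> : rnorm (mul (one - b) c - one) = 0 by [].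
set d := one - b; apply/le_anti; rewrite rnorm_ge0 andbT.
apply/ler_addgt0Pr => e e_gt0; rewrite add0r.
set e' := e / (rnorm d + 1).
have e'_gt0 : 0 < e' by rewrite divr_gt0 // ltr_wpDl ?rnorm_ge0.
near \oo => n.
have residual : mul d c - one = mul d (c - neumann n) - apow n.
  by rewrite amulrDr amulrN amul_neumann opprB addrA addrAC addrK.
have close : rnorm (c - neumann n) < e'.
  near: n; apply: filterS (cvgr_dist_lt _ _ Sc _ (_ : 0 < realC e')) => [n|].
    by rewrite rnormE realC_lt.
  by rewrite -realC0 realC_lt.
have small : r ^+ n < e' by near: n; exact: expr_lt_near.
rewrite residual; apply: le_trans (rnormD _ _) _; rewrite rnormN.
apply: le_trans (lerD (rnorm_amul _ _) (rnorm_apow n)) _.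
have : e = (rnorm d + 1) * e'.
  by rewrite /e' mulrC divfK // gt_eqF // ltr_wpDl ?rnorm_ge0.
have := rnorm_ge0 d; have := rnorm_ge0 (c - neumann n).
nra.
Unshelve. all: by end_near.
Qed.

End neumann_series.

Section character.
Variable phi : A -> CC R.
Hypothesis phi_char : is_character mul phi.

Lemma character_one : phi one = 1.
Proof.
case: phi_char => _ _ phiM [a phia_neq0].
by apply: (mulIf phia_neq0); rewrite mul1r -phiM amul1r.
Qed.

Lemma character_norm_le a : `|phi a| <= `|a|.
Proof.
case: (phi_char) => phiD phiZ phiM _.
have phiN x : phi (- x) = - phi x by rewrite -scaleN1r phiZ mulN1r.
rewrite [`|phi a|](realC_Re (normr_real _)) (rnormE a) realC_le leNgt; apply/negP.
set m := complex.Re `|phi a| => lt_a.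
have m_gt0 : 0 < m := le_lt_trans (rnorm_ge0 a) lt_a.
have phia_neq0 : phi a != 0.
  by apply: contraTneq m_gt0 => phia0; rewrite /m phia0 normr0 /= ltxx.
have b_lt1 : rnorm ((phi a)^-1 *: a) < 1.
  rewrite -realC_lt -rnormE normrZ normfV (realC_Re (normr_real (phi a))) -/m rnormE.
  by rewrite -realCV -realCM realC_lt mulrC ltr_pdivrMr // mul1r.
have [c /(congr1 phi)] := one_sub_rinvertible b_lt1.
rewrite phiM phiD phiN phiZ mulVf // character_one subrr mul0r.
by move/eqP; rewrite eq_sym oner_eq0.
Qed.

End character.
End banach_algebra.

Section set_type_topology.
Variables (T : topologicalType) (A : set T).

Lemma set_val_continuous : continuous (set_val : set_type A -> T).
Proof. exact: initial_continuous. Qed.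

Lemma nbhs_set_type (k : set_type A) (V : set (set_type A)) :
  nbhs k V -> exists2 W, nbhs (set_val k) W & set_val @^-1` W `<=` V.
Proof.
rewrite nbhsE => -[B [[W oW eW] Bk] BV].
exists W; last by rewrite eW.
by exists W => //; split => //; rewrite -eW in Bk.
Qed.

Lemma compact_set_type : compact A -> compact [set: set_type A].
Proof.
move=> A_compact F F_proper _.
have GA : (set_val @ F) A.
  by rewrite /=; apply: filterS filterT => -[x xA] _; exact: set_mem.
have [x [Ax x_cluster]] := A_compact _ (fmap_proper_filter set_val F_proper) GA.
exists (SigSub (mem_set Ax)); split => // U V FU /nbhs_set_type[W nW WV].
have FU' : (set_val @ F) (set_val @` U).
  by rewrite /=; apply: filterS FU => u Uu; exists u.
have [_ [[u Uu <-] Wu]] := x_cluster _ _ FU' nW.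
by exists u; split => //; exact: WV.
Qed.

Lemma set_type_hausdorff : hausdorff_space T -> hausdorff_space (set_type A).
Proof.
move=> T_hausdorff p q pq; apply: val_inj; apply: T_hausdorff => U V nU nV.
have [r [Ur Vr]] := pq _ _ (set_val_continuous nU) (set_val_continuous nV).
by exists (set_val r).
Qed.

End set_type_topology.

Section closed_level_sets.
Variables (R : realFieldType) (T : topologicalType).

Lemma closed_eq_continuous (f g : T -> R) :
  continuous f -> continuous g -> closed [set x | f x = g x].
Proof.
move=> f_cont g_cont.
have -> : [set x | f x = g x] = (fun x => f x - g x) @^-1` [set z | z = 0].
  apply/seteqP; split => x /= => [->|/eqP]; first exact: subrr.
  by rewrite subr_eq0 => /eqP.
apply: preimage_closed; last exact: closed_eq.
by move=> x _; apply: continuousB; [exact: f_cont | exact: g_cont].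
Qed.

Lemma closed_le_continuous (f : T -> R) (c : R) :
  continuous f -> closed [set x | f x <= c].
Proof.
by move=> f_cont; apply: preimage_closed (@closed_le R c) => x _.
Qed.

End closed_level_sets.

Section norming_space.
Variables (R : realType) (X : normedModType (CC R)).
Local Notation dual_ball := (@real_dual_ball R X : set {ptws X -> R}).

Lemma ptws_eval_continuous (x : X) : continuous (fun f : {ptws X -> R} => f x).
Proof. exact: (@proj_continuous X (fun _ => R) x). Qed.

Lemma real_dual_ball_closed : closed dual_ball.
Proof.
have -> : dual_ball = \bigcap_(p in [set: X * X * R])
    ([set f | f (p.1.1 + p.1.2) = f p.1.1 + f p.1.2] `&`
     [set f | f (realC p.2 *: p.1.1) = p.2 * f p.1.1] `&`
     [set f | f p.1.1 <= rnorm p.1.1]).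
  apply/seteqP; split=> [f [fD fZ fle] p _ | f f_cap].
    by split; first split; [exact: fD | exact: fZ | exact: fle].
  split=> [x y | t x | x].
  - by have [[]] := f_cap (x, y, 0) I.
  - by have [[]] := f_cap (x, 0, t) I.
  - by have [] := f_cap (x, 0, 0) I.
apply: closed_bigI => -[[x y] t] _; apply: closedI; first apply: closedI.
- apply: closed_eq_continuous; first exact: ptws_eval_continuous.
  by move=> f; apply: continuousD; exact: ptws_eval_continuous.
- apply: closed_eq_continuous; first exact: ptws_eval_continuous.
  move=> f /=; apply: continuousM; first exact: cst_continuous.
  exact: ptws_eval_continuous.
- exact/closed_le_continuous/ptws_eval_continuous.
Qed.

Lemma real_dual_ball_compact : compact dual_ball.
Proof.
have box_compact :
    compact [set f : {ptws X -> R} | forall x, `[- rnorm x, rnorm x] (f x)].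
  apply: (@tychonoff X (fun=> R) (fun x => `[- rnorm x, rnorm x])) => x.
  exact: segment_compact.
apply: subclosed_compact real_dual_ball_closed box_compact _.
move=> f [_ fZ fle] x /=; rewrite in_itv /= fle andbT lerNl.
by rewrite -mulN1r -fZ realCN realC1 scaleN1r -(rnormN x).
Qed.

Definition norming_space := set_type dual_ball.

Lemma norming_space_compact : compact [set: norming_space].
Proof. exact/compact_set_type/real_dual_ball_compact. Qed.

Lemma norming_space_hausdorff : hausdorff_space norming_space.
Proof.
apply: set_type_hausdorff; apply: hausdorff_product => _; exact: norm_hausdorff.
Qed.

Lemma norming_space_inhabited : inhabited norming_space.
Proof.
have [f f_ball _] := real_norming_functional (0 : X).
exact: inhabits (SigSub (mem_set f_ball)).
Qed.

Definition norming_embedding (x : X) (k : norming_space) : CC R :=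
  complexify (set_val k : X -> R) x.

Lemma norming_embedding_ball (k : norming_space) : dual_ball (set_val k).
Proof. exact: set_valP. Qed.

Lemma norming_embedding_continuous x : continuous (norming_embedding x).
Proof.
pose eval y (k : norming_space) := (set_val k : {ptws X -> R}) y.
have eval_realC y : continuous (@realC R \o eval y).
  move=> k; apply: (@continuous_comp _ _ _ (eval y) (@realC R)); last first.
    exact: realC_continuous.
  apply: (@continuous_comp _ _ _ set_val (fun f : {ptws X -> R} => f y)).
    exact: set_val_continuous.
  exact: ptws_eval_continuous.
have i_cont : continuous (fun _ : norming_space => ('i%C : CC R)).
  by move=> k; exact: cst_continuous.
move=> k.
exact: (continuousB (eval_realC x k) (continuousM (i_cont k) (eval_realC _ k))).
Qed.

Lemma norming_embeddingD x y k :
  norming_embedding (x + y) k = norming_embedding x k + norming_embedding y k.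
Proof. exact/complexifyD/norming_embedding_ball. Qed.

Lemma norming_embeddingZ (c : CC R) x k :
  norming_embedding (c *: x) k = c * norming_embedding x k.
Proof. exact/complexifyZ/norming_embedding_ball. Qed.

Lemma norming_embedding_isometry x : `|x| = supnorm (norming_embedding x).
Proof.
rewrite /supnorm (rnormE x); congr (_ +i* _)%C.
have [f f_ball fx] := real_norming_functional x.
pose k0 : norming_space := SigSub (mem_set f_ball).
have le_norm (k : norming_space) : complex.Re `|norming_embedding x k| <= rnorm x.
  rewrite -realC_le -rnormE -realC_Re ?normr_real //.
  exact/norm_complexify_le/norming_embedding_ball.
have ge_norm : rnorm x <= complex.Re `|norming_embedding x k0|.
  by rewrite -fx; exact: complexify_ge.
apply/le_anti/andP; split.
  apply: le_trans ge_norm _; apply: ub_le_sup; last by exists k0.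
  by exists (rnorm x) => _ [k _ <-].
apply: ge_sup => [|_ [k _ <-]]; last exact: le_norm.
by exists (complex.Re `|norming_embedding x k0|), k0.
Qed.

End norming_space.

Lemma supnorm_cst (R : realType) (K : Type) (z : CC R) :
  inhabited K -> supnorm (fun _ : K => z) = `|z|.
Proof.
case=> k0; rewrite /supnorm (realC_Re (normr_real z)).
have -> : [set complex.Re `|z| | _ in [set: K]] = [set complex.Re `|z|].
  by apply/seteqP; split=> [_ [k _ <-] // | _ ->]; exists k0.
by rewrite sup1.
Qed.

Section function_modules.
Variables (R : realType) (A : completeNormedModType (CC R)).
Variables (mul : A -> A -> A) (one : A).

Lemma character_function_module (phi : A -> CC R) (X : completeNormedModType (CC R)) :
  unital_banach_algebra mul one -> is_character mul phi ->
  function_module mul one (fun a (x : X) => phi a *: x).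
Proof.
move=> hA phi_char; have phi1 := character_one hA phi_char.
have phi_le := character_norm_le hA phi_char.
case: (phi_char) => phiD phiZ phiM _.
split.
  split=> [x | a x | a b x | | ].
  - by rewrite phi1 scale1r.
  - by rewrite normrZ ler_wpM2r.
  - by rewrite phiM scalerA.
  - by split=> [a b x | k a x]; rewrite ?phiD ?scalerDl // phiZ scalerA.
  - by split=> [a x y | k a x]; rewrite ?scalerDr // !scalerA mulrC.
exists (norming_space X), (@norming_embedding R X), (fun a _ => phi a); split.
- by split; [exact: norming_space_compact | exact: norming_space_hausdorff].
- split; first exact: norming_embedding_continuous.
  split; first exact: norming_embeddingD.
  split; first exact: norming_embeddingZ.
  exact: norming_embedding_isometry.
- split=> [a k | ]; first exact: cst_continuous.
  do 4 (split; first by move=> *; rewrite ?phiD ?phiZ ?phiM ?phi1).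
  by move=> a; rewrite supnorm_cst ?phi_le //; exact: norming_space_inhabited.
- by move=> a x k; rewrite norming_embeddingZ.
Qed.

Lemma function_module_character (X : completeNormedModType (CC R)) (act : A -> X -> X) :
  (exists x : X, x != 0) -> function_module mul one act ->
  exists phi, is_character mul phi.
Proof.
move=> [x x_neq0] [_ [K [i [theta [_ [_ [_ [_ i_iso]]]
  [_ [thetaD [thetaZ [thetaM [theta1 _]]]]] _]]]]].
have [k0 _] : exists k : K, True.
  apply: contrapT => K_empty; move/negP: x_neq0; apply; rewrite -normr_eq0.
  rewrite (i_iso x) /supnorm.
  have -> : [set complex.Re `|i x k| | k in [set: K]] = set0.
    by apply/seteqP; split=> // r [k _ _]; apply: K_empty; exists k.
  by rewrite sup0.
exists (theta^~ k0); split=> [a b | c a | a b | ]; rewrite ?thetaD ?thetaZ ?thetaM //.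
by exists one; rewrite theta1 oner_eq0.
Qed.

End function_modules.

Theorem mainTheorem6 (R : realType) (A : completeNormedModType (CC R))
    (mul : A -> A -> A) (one : A) :
  unital_banach_algebra mul one ->
  [/\ (exists phi : A -> CC R, is_character mul phi) <->
        (exists (X : completeNormedModType (CC R)),
           (exists x : X, x != 0) /\
           exists act : A -> X -> X, function_module mul one act),
      (exists phi : A -> CC R, is_character mul phi) <->
        (forall (X : completeNormedModType (CC R)),
           (exists x : X, x != 0) ->
           exists act : A -> X -> X, function_module mul one act) &
      forall (phi : A -> CC R), is_character mul phi ->
        forall (X : completeNormedModType (CC R)),
          function_module mul one (fun (a : A) (x : X) => phi a *: x)].
Proof.
move=> hA.
have A_nontrivial : exists a : A, a != 0.
  exists one; case: hA => _ _ _ _ [_ norm1].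
  by rewrite -normr_eq0 norm1; exact: oner_neq0.
have from_character (phi : A -> CC R) (X : completeNormedModType (CC R)) :
    is_character mul phi -> exists act : A -> X -> X, function_module mul one act.
  by move=> phi_char; exists (fun a x => phi a *: x); exact: character_function_module.
split.
- split=> [[phi phi_char] | [X [X_nontrivial [act act_mod]]]].
    by exists A; split; last exact: from_character phi A phi_char.
  exact: function_module_character X_nontrivial act_mod.
- split=> [[phi phi_char] X _ | all_mod]; first exact: from_character phi X phi_char.
  have [act act_mod] := all_mod A A_nontrivial.
  exact: function_module_character A_nontrivial act_mod.
- by move=> phi phi_char X; exact: character_function_module.
Qed.
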